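(* Assume $\mathrm{rank}\,R=q$ and $\mathrm{Ker}\,(D_{\xi_0}\varphi)\cap\mathrm{Ker}\,R=\{0\}$. Then: (i) $\mathcal{U}^\perp=\{\sigma\in\mathbb{R}^m:(D_{\xi_0}\varphi)^T\sigma\in\mathrm{Im}\,R^T\}$; moreover $\mathcal{V}=K^{-1}\mathcal{U}^\perp$, so $\dim\mathcal{U}^\perp=\dim\mathcal{V}$, and $\mathcal{V}=\mathcal{U}^{\perp_K}$, the orthogonal complement of $\mathcal U$ with respect to the inner product $(x,y)\mapsto x^TKy$; (ii) for every $\sigma\in\mathbb{R}^m$ and every $f\in\mathbb{R}^{nd}$, $(D_{\xi_0}\varphi)^T(-\sigma+Hf)\in\mathrm{Im}\,R^T$ if and only if $-\sigma+Hf\in\mathcal{U}^\perp$; (iii) $\dim\mathcal{U}=\dim\mathrm{Ker}\,R=nd-q$ and $\dim\mathcal{V}=m-nd+q$.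
   Context: $n,m,d,q$ are positive integers. $Q$ is an $n\times m$ matrix with entries in $\{0,1,-1\}$, each column having exactly one $1$ and one $-1$, other entries $0$. $\xi_0\in\mathbb{R}^{nd}$ lists node coordinates ($\xi^0_{d(j-1)+k}$ is the $k$-th coordinate of node $j$), with the endpoints of each spring distinct. $\varphi:\mathbb{R}^{nd}\to\mathbb{R}^m$, $\varphi_i(\xi)=\sqrt{\sum_{k=1}^d(\sum_{j}Q_{ji}\xi_{d(j-1)+k})^2}$, and $D_{\xi_0}\varphi$ is its $m\times nd$ Jacobian at $\xi_0$: $(D_{\xi_0}\varphi)_{i,d(j-1)+k}=\mathcal{D}_{ik}Q_{ji}$ with $\mathcal{D}_{ik}=\frac{1}{\varphi_i(\xi_0)}\sum_{\bar j}Q_{\bar ji}\xi^0_{d(\bar j-1)+k}$. $R$ is a $q\times nd$ matrix; $K=\mathrm{diag}(k_1,\dots,k_m)$ with all $k_i>0$. $H$ is the $m\times nd$ matrix formed by the first $m$ rows of the Moore–Penrose pseudoinverse of the $nd\times(m+q)$ matrix $\begin{pmatrix}(D_{\xi_0}\varphi)^T & R^T\end{pmatrix}$. $\mathcal{U}=\{(D_{\xi_0}\varphi)\zeta:\zeta\in\mathbb{R}^{nd},\,R\zeta=0\}\subset\mathbb{R}^m$, $\mathcal{V}=\{K^{-1}\sigma:(D_{\xi_0}\varphi)^T\sigma\in\mathrm{Im}\,R^T\}\subset\mathbb{R}^m$, and $\mathcal{U}^\perp$ is the orthogonal complement in the standard inner product. *)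

From HB Require Import structures.
From mathcomp Require Import all_boot all_order all_algebra.
From mathcomp Require Import reals.
Set Implicit Arguments. Unset Strict Implicit. Unset Printing Implicit Defensive.
Import Order.TTheory GRing.Theory Num.Theory.
Local Open Scope ring_scope.

Section SpringDefs.
Variable R : realType.

(* Index convention: coordinate k of node j (0-based) is entry
   [mxvec_index j k] = j*d + k of a vector in R^(n*d)
   (paper: d(j-1)+k with 1-based indices). *)

Definition incidence (n m : nat) (Q : 'M[R]_(n, m)) : Prop :=
  forall i : 'I_m, exists j1 : 'I_n, exists j2 : 'I_n,
    [/\ j1 != j2, Q j1 i = 1, Q j2 i = -1 &
        forall j, j != j1 -> j != j2 -> Q j i = 0].

Definition distinct_endpoints (n m d : nat) (Q : 'M[R]_(n, m))
    (xi0 : 'cV[R]_(n * d)) : Prop :=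
  forall (i : 'I_m) (j1 j2 : 'I_n), Q j1 i = 1 -> Q j2 i = -1 ->
    exists k : 'I_d, xi0 (mxvec_index j1 k) 0 != xi0 (mxvec_index j2 k) 0.

Definition phi (n m d : nat) (Q : 'M[R]_(n, m)) (xi : 'cV[R]_(n * d)) : 'cV[R]_m :=
  \col_(i < m) Num.sqrt (\sum_(k < d) (\sum_(j < n) Q j i * xi (mxvec_index j k) 0) ^+ 2).

Definition calD (n m d : nat) (Q : 'M[R]_(n, m)) (xi0 : 'cV[R]_(n * d))
    (i : 'I_m) (k : 'I_d) : R :=
  (phi Q xi0 i 0)^-1 * \sum_(jb < n) Q jb i * xi0 (mxvec_index jb k) 0.

Definition Dphi (n m d : nat) (Q : 'M[R]_(n, m)) (xi0 : 'cV[R]_(n * d))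
    : 'M[R]_(m, n * d) :=
  \matrix_(i < m) mxvec (\matrix_(j < n, k < d) (calD Q xi0 i k * Q j i)).

(* X is the Moore-Penrose pseudoinverse of A (the four Penrose equations;
   real matrices, so the adjoint is the transpose). It exists and is unique. *)
Definition is_MP_pinv (p r : nat) (A : 'M[R]_(p, r)) (X : 'M[R]_(r, p)) : Prop :=
  [/\ A *m X *m A = A, X *m A *m X = X,
      (A *m X)^T = A *m X & (X *m A)^T = X *m A].

(* Orthogonal complement of U in R^m w.r.t. the bilinear form (x,y) |-> x^T B y:
   the vectors y with u^T B y = 0 for every u in a basis (vbasis U) of U,
   i.e. for every u in U. *)
Definition orthK (m : nat) (B : 'M[R]_m) (U : {vspace 'cV[R]_m}) : {vspace 'cV[R]_m} :=
  lker (linfun (fun y : 'cV[R]_m =>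
     \col_(i < \dim U) ((tnth (vbasis U) i)^T *m B *m y) 0 0)).

Definition orth (m : nat) (U : {vspace 'cV[R]_m}) : {vspace 'cV[R]_m} :=
  orthK 1%:M U.

End SpringDefs.

From HB Require Import structures.
From mathcomp Require Import all_boot all_order all_algebra.
From mathcomp Require Import reals.
From mathcomp Require Import zify.
Import Order.TTheory GRing.Theory Num.Theory.
Local Open Scope ring_scope.

(* Everything follows from [(Ker A)^perp = Im A^T].  Since
   [sigma^T (D z) = (D^T sigma)^T z], the vector sigma is orthogonal to
   [U = D (Ker R)] iff [D^T sigma] is orthogonal to [Ker R], i.e. lies in
   [Im R^T]; and [y^T K u = (K y)^T u] turns K-orthogonality into ordinary
   orthogonality of [K y].  For the dimensions, D is injective on [Ker R],
   [dim Ker R = nd - rank R], and [dim U^perp = m - dim U]. *)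

Lemma linfunE_linear (F : fieldType) (aT rT : vectType F) (f : aT -> rT) :
  linear f -> linfun f =1 f.
Proof.
move=> f_lin.
exact: (lfunE (HB.pack f (GRing.isLinear.Build F aT rT _ f f_lin))).
Qed.

Section OrthogonalComplement.
Context {R : realType}.

Lemma dimv_cV {m} (U : {vspace 'cV[R]_m}) : (\dim U <= m)%N.
Proof. by have := dimvS (subvf U); rewrite dimvf /= dim_matrix mulr1. Qed.

Lemma memv_orthKP {m} (B : 'M[R]_m) (U : {vspace 'cV[R]_m}) y :
  reflect (forall u, u \in U -> (u^T *m B *m y) 0 0 = 0) (y \in orthK B U).
Proof.
rewrite /orthK memv_ker linfunE_linear; last first.
  move=> a x z; apply/matrixP=> i j; rewrite !mxE mulr_sumr -big_split /=.
  by apply: eq_bigr => l _; rewrite !mxE mulrDr mulrCA.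
apply: (iffP eqP) => [basis0 u Uu | U0].
  rewrite (coord_vbasis Uu) linear_sum /= !mulmx_suml summxE big1 // => i _.
  have := congr1 (fun M : 'cV_(\dim U) => M i 0) basis0.
  rewrite mxE [RHS]mxE (tnth_nth 0) => basis_i0.
  by rewrite linearZ /= -!scalemxAl mxE basis_i0 mulr0.
apply/matrixP=> i j; rewrite (ord1 j) mxE U0 ?mxE //.
by apply: vbasis_mem; rewrite mem_tnth.
Qed.

Lemma memv_orthP {m} (U : {vspace 'cV[R]_m}) y :
  reflect (forall u, u \in U -> (u^T *m y) 0 0 = 0) (y \in orth U).
Proof.
by apply: (iffP (memv_orthKP 1%:M U y)) => U0 u /U0; rewrite mulmx1.
Qed.

Lemma trmx_mul_self_eq0 {m} (u : 'cV[R]_m) : (u^T *m u) 0 0 = 0 -> u = 0.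
Proof.
rewrite mxE => sum_sq0; apply/matrixP => i j; rewrite (ord1 j) [RHS]mxE.
have /(_ i isT)/eqP : forall l, true -> u^T 0 l * u l 0 = 0.
  by apply: psumr_eq0P sum_sq0 => l _; rewrite mxE -expr2 sqr_ge0.
by rewrite mxE mulf_eq0 orbb => /eqP.
Qed.

Lemma capv_orth {m} (U : {vspace 'cV[R]_m}) : (U :&: orth U = 0)%VS.
Proof.
apply/eqP; rewrite -subv0; apply/subvP => u /memv_capP [Uu /memv_orthP Uperp_u].
by rewrite memv0; apply/eqP/trmx_mul_self_eq0/Uperp_u.
Qed.

Lemma dim_orthK_ge {m} (B : 'M[R]_m) (U : {vspace 'cV[R]_m}) :
  (m - \dim U <= \dim (orthK B U))%N.
Proof.
rewrite /orthK; set f := linfun _.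
have := limg_ker_dim f fullv; rewrite capfv dimvf /= dim_matrix mulr1.
have := dimv_cV (limg f).
move: (\dim (lker f)) (\dim (limg f)) => a b; lia.
Qed.

Lemma dim_orth {m} (U : {vspace 'cV[R]_m}) : \dim (orth U) = (m - \dim U)%N.
Proof.
apply/eqP; rewrite eqn_leq dim_orthK_ge andbT.
have := dimv_cV (U + orth U)%VS; rewrite dimv_disjoint_sum ?capv_orth //.
by rewrite leq_subRL ?dimv_cV.
Qed.

Lemma memv_orth_img {p r} (A : 'M[R]_(p, r)) (W : {vspace 'cV[R]_r}) sigma :
  (sigma \in orth (linfun (mulmx A : 'cV[R]_r -> 'cV[R]_p) @: W)) =
  (A^T *m sigma \in orth W).
Proof.
have dotA z : ((A *m z)^T *m sigma) 0 0 = (z^T *m (A^T *m sigma)) 0 0.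
  by rewrite trmx_mul mulmxA.
apply/memv_orthP/memv_orthP => [AWperp z Wz | Wperp _ /memv_imgP [z Wz ->]].
  by rewrite -dotA AWperp // -[A *m z]lfunE memv_img.
by rewrite lfunE dotA Wperp.
Qed.

Lemma memv_orth_fullv {m} (y : 'cV[R]_m) : (y \in orth fullv) = (y == 0).
Proof.
apply/memv_orthP/eqP => [fullperp_y | ->]; last by move=> u _; rewrite mulmx0 mxE.
exact/trmx_mul_self_eq0/fullperp_y/memvf.
Qed.

Lemma orth_limg_mulmx {p r} (A : 'M[R]_(p, r)) :
  orth (limg (linfun (mulmx A : 'cV[R]_r -> 'cV[R]_p))) =
  lker (linfun (mulmx A^T : 'cV[R]_p -> 'cV[R]_r)).
Proof.
by apply/vspaceP => y; rewrite memv_orth_img memv_orth_fullv memv_ker lfunE.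
Qed.

Lemma orth_lker_mulmx {p r} (A : 'M[R]_(p, r)) :
  orth (lker (linfun (mulmx A : 'cV[R]_r -> 'cV[R]_p))) =
  limg (linfun (mulmx A^T : 'cV[R]_p -> 'cV[R]_r)).
Proof.
set KA := lker _; set IA := limg _.
have IA_sub : (IA <= orth KA)%VS.
  apply/subvP => _ /memv_imgP [t _ ->]; rewrite lfunE /=.
  apply/memv_orthP => u; rewrite memv_ker lfunE /= => /eqP Au0.
  by rewrite mulmxA -trmx_mul Au0 trmx0 mul0mx mxE.
have dim_KA : \dim KA = (r - \dim IA)%N.
  by rewrite -dim_orth orth_limg_mulmx trmxK.
apply/eqP; rewrite eq_sym eqEdim IA_sub /= dim_orth dim_KA.
by rewrite subKn ?dimv_cV.
Qed.

Lemma orthK_unitmx {m} (B : 'M[R]_m) (U : {vspace 'cV[R]_m}) :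
  B \in unitmx ->
  orthK B U = (linfun (mulmx (invmx B) : 'cV[R]_m -> 'cV[R]_m) @: orth U)%VS.
Proof.
move=> B_unit; apply/vspaceP => y; apply/memv_orthKP/memv_imgP.
  move=> BUperp_y; exists (B *m y); last by rewrite lfunE /= mulKmx.
  by apply/memv_orthP => u Uu; rewrite mulmxA BUperp_y.
move=> [w /memv_orthP Uperp_w ->] u Uu.
by rewrite lfunE /= -mulmxA mulKVmx // Uperp_w.
Qed.

Lemma lker_mulmx_unitmx {m} (B : 'M[R]_m) :
  B \in unitmx -> lker (linfun (mulmx B : 'cV[R]_m -> 'cV[R]_m)) = 0%VS.
Proof.
move=> B_unit; apply/eqP/lker0P => x y; rewrite !lfunE /=.
by move/(congr1 (mulmx (invmx B))); rewrite !mulKmx.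
Qed.

Lemma dim_limg_mulmx_trmx {p r} (A : 'M[R]_(p, r)) :
  row_free A -> \dim (limg (linfun (mulmx A^T : 'cV[R]_p -> 'cV[R]_r))) = p.
Proof.
move=> A_free; rewrite limg_dim_eq ?dimvf /= ?dim_matrix ?mulr1 //.
rewrite capfv; apply/eqP/lker0P => x y; rewrite !lfunE /= => ATx_ATy.
apply/trmx_inj/(row_free_inj A_free).
by rewrite -(trmxK A) -!trmx_mul ATx_ATy.
Qed.

Lemma diag_mx_pos_unitmx {m} (k : 'I_m -> R) :
  (forall i, 0 < k i) -> diag_mx (\row_i k i) \in unitmx.
Proof.
move=> k_pos; rewrite unitmxE det_diag unitfE; apply/prodf_neq0 => i _.
by rewrite mxE lt0r_neq0.
Qed.

End OrthogonalComplement.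

Theorem proposition7 (R : realType) (n m d q : nat)
    (Q : 'M[R]_(n, m)) (xi0 : 'cV[R]_(n * d))
    (Rm : 'M[R]_(q, n * d)) (k : 'I_m -> R)
    (X : 'M[R]_(m + q, n * d)) :
  incidence Q ->
  distinct_endpoints Q xi0 ->
  (forall i, 0 < k i) ->
  let D := Dphi Q xi0 in
  let K : 'M[R]_m := diag_mx (\row_i k i) in
  is_MP_pinv (row_mx D^T Rm^T) X ->
  let H : 'M[R]_(m, n * d) := usubmx X in
  let KerD := lker (linfun (mulmx D : 'cV[R]_(n * d) -> 'cV[R]_m)) in
  let KerR := lker (linfun (mulmx Rm : 'cV[R]_(n * d) -> 'cV[R]_q)) in
  let ImRT := limg (linfun (mulmx Rm^T : 'cV[R]_q -> 'cV[R]_(n * d))) in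
  let U : {vspace 'cV[R]_m} :=
    (linfun (mulmx D : 'cV[R]_(n * d) -> 'cV[R]_m) @: KerR)%VS in
  let V : {vspace 'cV[R]_m} :=
    (linfun (mulmx (invmx K) : 'cV[R]_m -> 'cV[R]_m) @:
       (linfun (mulmx D^T : 'cV[R]_m -> 'cV[R]_(n * d)) @^-1: ImRT))%VS in
  \rank Rm = q ->
  (KerD :&: KerR = 0)%VS ->
  [/\ (* (i) *)
      [/\ (forall sigma : 'cV[R]_m, (sigma \in orth U) = (D^T *m sigma \in ImRT)),
      V = (linfun (mulmx (invmx K) : 'cV[R]_m -> 'cV[R]_m) @: orth U)%VS,
      \dim (orth U) = \dim V &
      V = orthK K U],
      (* (ii) *)
      (forall (sigma : 'cV[R]_m) (f : 'cV[R]_(n * d)),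
          (D^T *m (- sigma + H *m f) \in ImRT) = (- sigma + H *m f \in orth U)) &
      (* (iii) *)
      [/\ \dim U = \dim KerR,
      \dim KerR = (n * d - q)%N &
      (\dim V)%:Z = (m%:Z - (n * d)%:Z + q%:Z)%R]].
Proof.
move=> _ _ k_pos D K _ H KerD KerR ImRT U V rkR capDR.
have orthKerR : orth KerR = ImRT by apply: orth_lker_mulmx.
have memU sigma : (sigma \in orth U) = (D^T *m sigma \in ImRT).
  by rewrite memv_orth_img orthKerR.
have V_def : V = (linfun (mulmx (invmx K)) @: orth U)%VS.
  by congr (_ @: _)%VS; apply/vspaceP => s; rewrite -memv_preim lfunE memU.
have K_unit : K \in unitmx by apply: diag_mx_pos_unitmx.
have dimV : \dim V = \dim (orth U).
  by rewrite V_def limg_dim_eq // lker_mulmx_unitmx ?unitmx_inv // capv0.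
have dimU : \dim U = \dim KerR by rewrite limg_dim_eq // capvC.
have dimKerR : \dim KerR = (n * d - q)%N.
  have := dim_orth KerR; rewrite orthKerR dim_limg_mulmx_trmx ?/row_free ?rkR //.
  by move=> ->; rewrite subKn ?dimv_cV.
split; first split.
- exact: memU.
- exact: V_def.
- by rewrite dimV.
- by rewrite V_def orthK_unitmx.
- by move=> s f; rewrite memU.
split => //; rewrite dimV dim_orth dimU dimKerR.
have := rank_leq_col Rm; have := dimv_cV U; rewrite dimU dimKerR rkR.
move: (n * d)%N => N; lia.
Qed.
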